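(* Let $w,x\in\mathfrak{S}_n$ be such that $x$ is represented by a run, i.e. $x=\sigma_p\sigma_{p+1}\cdots\sigma_{p+q}$ or $x=\sigma_p\sigma_{p-1}\cdots\sigma_{p-q}$ for some $p$ and $q\ge0$. Then $|\lambda_1(wx)-\lambda_1(w)|\le1$.
   Context: Permutations are composed right to left and $\sigma_i=(i,i+1)$. For $u\in\mathfrak{S}_n$, $\lambda_1(u)$ is the length of the first row of the shape of the tableaux associated to $u$ by the Robinson–Schensted correspondence; equivalently, the length of a longest increasing subsequence of the one-line notation of $u$. *)

From mathcomp Require Import all_boot all_order all_fingroup.
Set Implicit Arguments. Unset Strict Implicit. Unset Printing Implicit Defensive.

(* Permutations of {1,...,n} are modelled as {perm 'I_n}; the value k of 'I_n
   stands for the letter k+1. *)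

(* Composition right to left: (perm_comp u v) i = u (v i).
   (MathComp's group product is left to right: (v * u)%g i = u (v i).) *)
Definition perm_comp n (u v : {perm 'I_n}) : {perm 'I_n} := (v * u)%g.

(* sigma_i = (i, i+1) for 1 <= i <= n-1, i.e. the transposition of the
   0-based positions i-1 and i; it is the identity for out-of-range i. *)
Definition sigma n (i : nat) : {perm 'I_n} :=
  match (insub i.-1 : option 'I_n), (insub i : option 'I_n) with
  | Some a, Some b => tperm a b
  | _, _ => 1%g
  end.

Definition sigma_word n (l : seq nat) : {perm 'I_n} :=
  foldr (fun i acc => perm_comp (sigma n i) acc) 1%g l.

Definition run_up n (p q : nat) : {perm 'I_n} :=
  sigma_word n [seq p + k | k <- iota 0 q.+1].

Definition run_down n (p q : nat) : {perm 'I_n} :=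
  sigma_word n [seq p - k | k <- iota 0 q.+1].

Definition lambda1 n (u : {perm 'I_n}) : nat :=
  \max_(A : {set 'I_n} |
          [forall i in A, forall j in A, (i < j) ==> (u i < u j)]) #|A|.

(* A run x is a cyclic shift of a block of consecutive letters: it moves a
   single letter c to one end of the block and is increasing on all the other
   letters.  Hence if A is the set of positions of an increasing subsequence
   of wx, then x(A \ {c}) is the set of positions of an increasing subsequence
   of w, so lambda_1(wx) <= lambda_1(w) + 1.  The inverse of x is increasing
   off the single letter x(c), and w = (wx) x^-1 gives the other inequality. *)
From mathcomp Require Import all_boot all_order all_fingroup.
From mathcomp Require Import zify.
Set Implicit Arguments. Unset Strict Implicit. Unset Printing Implicit Defensive.

Lemma sigmaE n i (k : 'I_n) : 1 <= i -> i < n ->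
  (sigma n i k : nat) = if k == i.-1 :> nat then i else if k == i :> nat then i.-1 else k.
Proof.
move=> i_gt0 lt_in; have lt_i1n : i.-1 < n by lia.
rewrite /sigma (insubT (fun m => m < n) lt_i1n) (insubT (fun m => m < n) lt_in) /=.
case: tpermP => [->|->|/eqP ka /eqP kb] /=; last rewrite -!(inj_eq val_inj) /= in ka kb;
  by repeat case: ifP => ?; lia.
Qed.

Lemma sigma_word_cons n i l (k : 'I_n) :
  sigma_word n (i :: l) k = sigma n i (sigma_word n l k).
Proof. by rewrite /= /perm_comp permM. Qed.

Lemma run_upE n p q (k : 'I_n) : 1 <= p -> p + q < n ->
  (run_up n p q k : nat) =
  if (p.-1 <= k) && (k < p + q) then k.+1
  else if k == p + q :> nat then p.-1 else k.
Proof.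
elim: q p => [|q IHq] p p_gt0 lt_pqn.
  by rewrite /run_up /= /perm_comp mul1g sigmaE ?addn0 //; repeat case: ifP => ?; lia.
have shift : [seq p + k | k <- iota 1 q.+1] = [seq p.+1 + k | k <- iota 0 q.+1].
  by rewrite (iotaDl 1 0) -map_comp; apply: eq_map => m /=; lia.
rewrite /run_up (_ : iota 0 q.+2 = 0 :: iota 1 q.+1) // map_cons shift addn0.
rewrite sigma_word_cons -/(run_up n p.+1 q) sigmaE; [|lia|lia].
move: (run_up n p.+1 q k : nat) (IHq p.+1 ltac:(lia) ltac:(lia)) => m.
by repeat case: ifP => ?; lia.
Qed.

Lemma run_downE n p q (k : 'I_n) : q < p -> p < n ->
  (run_down n p q k : nat) =
  if (p - q <= k) && (k <= p) then k.-1
  else if k == (p - q).-1 :> nat then p else k.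
Proof.
elim: q p => [|q IHq] p lt_qp lt_pn.
  by rewrite /run_down /= /perm_comp mul1g subn0 sigmaE //; repeat case: ifP => ?; lia.
have shift : [seq p - k | k <- iota 1 q.+1] = [seq p.-1 - k | k <- iota 0 q.+1].
  by rewrite (iotaDl 1 0) -map_comp; apply: eq_map => m /=; lia.
rewrite /run_down (_ : iota 0 q.+2 = 0 :: iota 1 q.+1) // map_cons shift subn0.
rewrite sigma_word_cons -/(run_down n p.-1 q) sigmaE; [|lia|lia].
move: (run_down n p.-1 q k : nat) (IHq p.-1 ltac:(lia) ltac:(lia)) => m.
by repeat case: ifP => ?; lia.
Qed.

Definition increasing_off n (x : {perm 'I_n}) (c : 'I_n) :=
  forall i j : 'I_n, i != c -> j != c -> i < j -> x i < x j.

Lemma run_up_increasing_off n p q : 1 <= p -> p + q <= n - 1 ->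
  exists c, increasing_off (run_up n p q) c.
Proof.
move=> p_gt0 le_pq; have lt_pqn : p + q < n by lia.
exists (Ordinal lt_pqn) => i j; rewrite -!(inj_eq val_inj) /= => ic jc ij.
by rewrite !run_upE //; repeat case: ifP => ?; lia.
Qed.

Lemma run_down_increasing_off n p q : q < p -> p <= n - 1 ->
  exists c, increasing_off (run_down n p q) c.
Proof.
move=> lt_qp le_p; have lt_cn : (p - q).-1 < n by lia.
exists (Ordinal lt_cn) => i j; rewrite -!(inj_eq val_inj) /= => ic jc ij.
by rewrite !run_downE //; repeat case: ifP => ?; lia.
Qed.

Section IncreasingOff.

Variables (n : nat) (x : {perm 'I_n}) (c : 'I_n).
Hypothesis x_incr : increasing_off x c.

Lemma increasing_off_ltE i j : i != c -> j != c -> (x i < x j) = (i < j).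
Proof.
move=> ic jc; case: (ltngtP i j) => [ij|ji|/val_inj ->]; last by rewrite ltnn.
- exact: x_incr.
- by apply/negbTE; rewrite -leqNgt ltnW // x_incr.
Qed.

Lemma increasing_offV : increasing_off x^-1%g (x c).
Proof.
have notc k : k != x c -> (x^-1)%g k != c by apply: contra => /eqP <-; rewrite permKV.
move=> i j ic jc ij.
by rewrite -(increasing_off_ltE (notc _ ic) (notc _ jc)) !permKV.
Qed.

Lemma lambda1_comp_increasing_off (w : {perm 'I_n}) :
  lambda1 (perm_comp w x) <= lambda1 w + 1.
Proof.
apply/bigmax_leqP => A /forall_inP incrA.
set B := x @: (A :\ c).
have incrB : [forall i in B, forall j in B, (i < j) ==> (w i < w j)].
  apply/forall_inP => _ /imsetP [a /setD1P [ac aA] ->].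
  apply/forall_inP => _ /imsetP [b /setD1P [bc bA] ->].
  apply/implyP; rewrite increasing_off_ltE // => ab.
  by have /forall_inP/(_ b bA)/implyP/(_ ab) := incrA a aA; rewrite /perm_comp !permM.
apply: leq_trans (leq_add (leq_bigmax_cond _ incrB) (leqnn 1)).
rewrite card_imset; last exact: perm_inj.
by rewrite (cardsD1 c A) addnC leq_add2l; case: (c \in A).
Qed.

End IncreasingOff.

Lemma lambda1_comp_bounds n (w x : {perm 'I_n}) c : increasing_off x c ->
  lambda1 (perm_comp w x) <= lambda1 w + 1 /\ lambda1 w <= lambda1 (perm_comp w x) + 1.
Proof.
move=> x_incr; split; first exact: lambda1_comp_increasing_off x_incr w.
have := lambda1_comp_increasing_off (increasing_offV x_incr) (perm_comp w x).
by rewrite /perm_comp mulKg.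
Qed.

Theorem lemma6p2 (n : nat) (w x : {perm 'I_n}) :
  (exists p q : nat,
     (1 <= p /\ p + q <= n - 1 /\ x = run_up n p q) \/
     (q < p /\ p <= n - 1 /\ x = run_down n p q)) ->
  lambda1 (perm_comp w x) <= lambda1 w + 1 /\ lambda1 w <= lambda1 (perm_comp w x) + 1.
Proof.
move=> [p [q [[p_gt0 [le_pq ->]]|[lt_qp [le_p ->]]]]].
- by have [c] := run_up_increasing_off p_gt0 le_pq; apply: lambda1_comp_bounds.
- by have [c] := run_down_increasing_off lt_qp le_p; apply: lambda1_comp_bounds.
Qed.
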